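(* For all integers $\ell\ge 5$ and $b\ge 5$ there exists a planar graph $G$ that contains no subgraph isomorphic to $K_4$ or to $B_b$, contains no subgraph isomorphic to $C_k$ for any $5\le k\le \ell$, and is not properly $3$-colorable.
   Context: $K_n$ is the complete graph and $C_n$ the cycle on $n$ vertices. For $n\ge 3$, the book $B_n$ is the graph on $n$ vertices consisting of $n-2$ triangles sharing one common edge. *)

From Stdlib Require Rdefinitions.
From HB Require Import structures.
From mathcomp Require Import all_boot all_order all_algebra.
From mathcomp Require Import all_classical all_reals all_analysis.
From mathcomp Require Import Rstruct Rstruct_topology.

Set Implicit Arguments.
Unset Strict Implicit.
Unset Printing Implicit Defensive.

Import Order.TTheory GRing.Theory Num.Theory.

Definition simple_graph (T : finType) (e : rel T) : Prop :=
  symmetric e /\ irreflexive e.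

Definition contains_subgraph (U : finType) (h : rel U) (T : finType) (e : rel T) : Prop :=
  exists f : U -> T, injective f /\ forall x y, h x y -> e (f x) (f y).

Definition K_rel (n : nat) : rel 'I_n := fun i j => i != j.

(* Cycle C_n on 'I_n (a cycle for n >= 3): i ~ i+1 mod n. *)
Definition C_rel (n : nat) : rel 'I_n :=
  fun i j => (i != j) &&
    ((nat_of_ord j == (nat_of_ord i).+1 %% n) || (nat_of_ord i == (nat_of_ord j).+1 %% n)).

(* Book B_n on 'I_n (n >= 3): spine edge {0,1}, and both 0 and 1 adjacent to
   every other vertex; i.e. n-2 triangles sharing the edge {0,1}. *)
Definition B_rel (n : nat) : rel 'I_n :=
  fun i j => (i != j) && ((nat_of_ord i < 2) || (nat_of_ord j < 2)).

Definition three_colorable (T : finType) (e : rel T) : Prop :=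
  exists c : T -> 'I_3, forall x y, e x y -> c x != c y.

Local Open Scope classical_set_scope.
Local Open Scope ring_scope.

Definition unit_I : set Rdefinitions.R := [set t : Rdefinitions.R | (0 <= t <= 1)%R].
Definition open_unit_I : set Rdefinitions.R := [set t : Rdefinitions.R | (0 < t < 1)%R].

(* Arcs are indexed by
   ordered pairs; the disjointness requirement concerns only pairs of
   different (unordered) edges. *)
Definition planar (T : finType) (e : rel T) : Prop :=
  exists (pos : T -> (Rdefinitions.R * Rdefinitions.R)%type) (arc : T -> T -> Rdefinitions.R -> (Rdefinitions.R * Rdefinitions.R)%type),
    injective pos /\
    forall x y, e x y ->
      [/\ {within unit_I, continuous (arc x y)},
          arc x y 0%R = pos x /\ arc x y 1%R = pos y,
          {in unit_I &, injective (arc x y)},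
          (forall t z, open_unit_I t -> arc x y t <> pos z) &
          (forall u v s t, e u v -> ~ ([set x; y] = [set u; v] :> set T) ->
             open_unit_I s -> open_unit_I t -> arc x y s <> arc u v t)].

From Stdlib Require Rdefinitions.
From mathcomp Require Import all_boot all_order all_algebra.
From mathcomp Require Import all_classical all_reals all_analysis.
From mathcomp Require Import Rstruct Rstruct_topology.
From mathcomp Require Import lra zify.

Set Implicit Arguments.
Unset Strict Implicit.
Unset Printing Implicit Defensive.

Import Order.TTheory GRing.Theory Num.Theory.
Import numFieldNormedType.Exports.

(* The graph is a ring of N diamonds (copies of K4 minus an edge) glued tip to
   tip along positions 0, 2, ..., 2N, closed up by an edge between the two end
   tips.  The tips of a diamond get the same colour in a proper 3-colouring, so
   the closing edge would be monochromatic.  Drawing every vertex at the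
   abscissa of its position gives a straight-line plane drawing.  A triangle
   cannot use the closing edge, so a K4 or a book B5 would have all its
   relevant pairs at adjacent positions, where there is no room for it.  A
   cycle through the closing edge has length more than 2N; any other cycle
   cannot pass an even position (a cut vertex) strictly between its extreme
   positions, so it lies inside one diamond and has at most 4 vertices. *)

Definition near (a b : nat) : bool := (a <= b.+1) && (b <= a.+1).

Lemma near_walk_dist (g : nat -> nat) a n :
  (forall i, a <= i < a + n -> near (g i) (g i.+1)) ->
  g (a + n) <= g a + n /\ g a <= g (a + n) + n.
Proof.
elim: n => [|n IH] gnear; first by rewrite addn0; lia.
have [|ub lb] := IH; first by move=> i hi; apply: gnear; lia.
by have := gnear (a + n); rewrite /near addnS; lia.
Qed.

Lemma near_walk_ivt (g : nat -> nat) a n v :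
  (forall i, a <= i < a + n -> near (g i) (g i.+1)) ->
  minn (g a) (g (a + n)) <= v <= maxn (g a) (g (a + n)) ->
  exists2 i, a <= i <= a + n & g i = v.
Proof.
elim: n => [|n IH] gnear hv.
  by exists a; move: hv; rewrite addn0; lia.
have gstep := gnear (a + n); rewrite addnS in hv gstep *.
case: (boolP (minn (g a) (g (a + n)) <= v <= maxn (g a) (g (a + n)))) => hv'.
  have [|i hi giv] := IH _ hv'; first by move=> i hi; apply: gnear; lia.
  by exists i => //; lia.
by exists (a + n).+1; move: gstep hv hv'; rewrite /near; lia.
Qed.

Section Periodic.
Variable k : nat.

Lemma periodic_mod (T : Type) (g : nat -> T) :
  (forall i, g (i + k) = g i) -> forall i, g (i %% k) = g i.
Proof.
move=> g_periodic i; rewrite [in RHS](divn_eq i k) addnC.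
by elim: (i %/ k) => [|q IH]; rewrite ?mul0n ?addn0 // mulSnr addnA g_periodic.
Qed.

Hypothesis k_gt0 : 0 < k.

Lemma periodic_argmin (g : nat -> nat) : (forall i, g (i + k) = g i) ->
  exists2 m, m < k & forall i, g m <= g i.
Proof.
move=> g_periodic.
case: (@arg_minnP _ (Ordinal k_gt0) predT (fun i : 'I_k => g i) isT) => m _ gm.
exists m => // i; rewrite -[g i](periodic_mod g_periodic).
exact: (gm (Ordinal (ltn_pmod i k_gt0)) isT).
Qed.

Lemma periodic_argmax (g : nat -> nat) : (forall i, g (i + k) = g i) ->
  exists2 M, M < k & forall i, g i <= g M.
Proof.
move=> g_periodic.
case: (@arg_maxnP _ (Ordinal k_gt0) predT (fun i : 'I_k => g i) isT) => M _ gM.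
exists M => // i; rewrite -[g i](periodic_mod g_periodic).
exact: (gM (Ordinal (ltn_pmod i k_gt0)) isT).
Qed.

(* A value strictly between the minimum and the maximum is taken on both arcs of
   the period from a minimum to a maximum, hence it is odd. *)
Lemma periodic_walk_window (g : nat -> nat) :
  (forall i, g (i + k) = g i) -> (forall i, near (g i) (g i.+1)) ->
  (forall i j, i < j < i + k -> g j = g i -> odd (g i)) ->
  exists Q, forall i, Q <= g i <= Q + 2 /\ (odd Q -> g i <= Q + 1).
Proof.
move=> g_periodic g_near g_rep.
have [m ltmk gm] := periodic_argmin g_periodic.
pose h i := g (m + i).
have h_periodic i : h (i + k) = h i by rewrite /h addnA g_periodic.
have g_as_h i : g i = h (i %% k + (k - m)).
  by rewrite /h addnCA subnKC ?(ltnW ltmk) // g_periodic periodic_mod.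
have [J ltJk hJ] := periodic_argmax h_periodic.
have h_near i : near (h i) (h i.+1) by rewrite /h addnS.
have mid_odd v : h 0 < v < h J -> odd v.
  case/andP=> lo hi.
  have [|i1 /andP [_ i1J] hi1] := @near_walk_ivt h 0 J v (fun i _ => h_near i).
    by rewrite add0n; lia.
  have [|i2 /andP [Ji2 i2k] hi2] := @near_walk_ivt h J (k - J) v (fun i _ => h_near i).
    by rewrite subnKC ?(ltnW ltJk) // -[k]add0n h_periodic; lia.
  have i1_ne0 : i1 != 0 by apply: contraTneq lo => i10; rewrite -hi1 i10 ltnn.
  have i1_neJ : i1 != J by apply: contraTneq hi => i1J_eq; rewrite -hi1 i1J_eq ltnn.
  have i2_neJ : i2 != J by apply: contraTneq hi => i2J; rewrite -hi2 i2J ltnn.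
  have i2_nek : i2 != k by apply: contraTneq lo => i2k_eq; rewrite -hi2 i2k_eq -[k]add0n h_periodic ltnn.
  by rewrite -hi1; apply: (g_rep (m + i1) (m + i2)); [lia | rewrite -/(h i1) -/(h i2) hi1 hi2].
exists (h 0) => i; rewrite g_as_h.
have := mid_odd (h 0).+1; have := mid_odd (h 0).+2.
by have := hJ (i %% k + (k - m)); have := gm (m + (i %% k + (k - m))); rewrite /h addn0; lia.
Qed.

End Periodic.

Section CycleWalk.
Variables (T : finType) (e : rel T) (k : nat) (k_gt1 : 1 < k) (f : 'I_k -> T).
Hypotheses (f_inj : injective f) (f_adj : forall i j, C_rel i j -> e (f i) (f j)).

Definition cyc (i : nat) : T := f (Ordinal (ltn_pmod i (ltnW k_gt1))).

Lemma cycD i : cyc (i + k) = cyc i.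
Proof. by congr f; apply: val_inj; rewrite /= modnDr. Qed.

Lemma cyc_adj i : e (cyc i) (cyc i.+1).
Proof.
have succ_mod : i.+1 %% k = (i %% k).+1 %% k by rewrite -addn1 -modnDml addn1.
apply: f_adj; rewrite /C_rel -val_eqE /= succ_mod eqxx orTb andbT.
move: (i %% k) (ltn_pmod i (ltnW k_gt1)) => r ltrk.
case: (ltnP r.+1 k) => rk; first by rewrite modn_small // neq_ltn ltnSn.
have -> : r.+1 = k by lia.
by rewrite modnn; apply/eqP; lia.
Qed.

Lemma cyc_window_inj i j : i <= j < i + k -> cyc j = cyc i -> j = i.
Proof.
case/andP=> ij jik /f_inj /(congr1 val) /= /eqP.
rewrite -(subnKC ij) -[X in _ == X %% k]addn0 eqn_modDl mod0n modn_small; lia.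
Qed.

End CycleWalk.

Lemma contains_subgraph_trans (U V W : finType) (h : rel U) (g : rel V) (e : rel W) :
  contains_subgraph h g -> contains_subgraph g e -> contains_subgraph h e.
Proof.
move=> [f [f_inj f_adj]] [f' [f'_inj f'_adj]].
by exists (f' \o f); split=> [|x y /f_adj /f'_adj //]; exact: inj_comp.
Qed.

Lemma B_rel_leq m n : m <= n -> contains_subgraph (@B_rel m) (@B_rel n).
Proof. by move=> mn; exists (widen_ord mn); split=> [i j /(congr1 val) /= /val_inj|]. Qed.

Lemma ord3_pigeonhole (a b c d : 'I_3) :
  a != b -> a != c -> b != c -> a != d -> b != d -> c = d.
Proof.
by case: a b c d => [[|[|[|//]]] ?] [[|[|[|//]]] ?] [[|[|[|//]]] ?] [[|[|[|//]]] ?];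
  rewrite -?val_eqE //= => *; apply: val_inj.
Qed.

Section Segment.
Local Open Scope ring_scope.
Variable R : realType.

Definition seg (P Q : R * R) (t : R) : R * R :=
  (P.1 + t * (Q.1 - P.1), P.2 + t * (Q.2 - P.2)).

Lemma seg_continuous P Q : continuous (seg P Q).
Proof.
have affine (a c : R) : continuous (fun t : R => a + t * c).
  by move=> t; apply: cvgD; [exact: cvg_cst | apply: cvgMl; exact: cvg_id].
by move=> t; apply: (@cvg_pair _ _ _ _ (nbhs (seg P Q t).1) (nbhs (seg P Q t).2)); exact: affine.
Qed.

Lemma seg0 P Q : seg P Q 0 = P.
Proof. by case: P => a b; rewrite /seg !mul0r !addr0. Qed.

Lemma seg1 P Q : seg P Q 1 = Q.
Proof. by rewrite /seg; case: Q => c d /=; congr pair; lra. Qed.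

Lemma segC P Q t : seg P Q t = seg Q P (1 - t).
Proof. by rewrite /seg; congr pair; lra. Qed.

Lemma seg_inj P Q : P != Q -> injective (seg P Q).
Proof.
case: P Q => [p1 p2] [q1 q2] PQ s t [/addrI e1 /addrI e2].
have [q1p1|q1p1] := eqVneq q1 p1; last by apply: (mulIf _ e1); rewrite subr_eq0.
have [q2p2|q2p2] := eqVneq q2 p2; last by apply: (mulIf _ e2); rewrite subr_eq0.
by move: PQ; rewrite q1p1 q2p2 eqxx.
Qed.

Lemma natr_add_frac_inj (a b : nat) (s t : R) : 0 <= s < 1 -> 0 <= t < 1 ->
  a%:R + s = b%:R + t -> a = b.
Proof.
move=> /andP [s0 s1] /andP [t0 t1] e.
have : (a%:R : R) < b%:R + 1 /\ (b%:R : R) < a%:R + 1 by split; lra.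
by rewrite !natr1 !ltr_nat; lia.
Qed.

End Segment.

(* Vertex (i, c) sits at position i in [0, 2N] on layer c.  Only odd positions
   carry an upper-layer vertex: (i, true) with i even is an isolated dummy. *)
Notation vertex N := ('I_(N.*2).+1 * bool)%type.

Section DiamondRing.
Variable N : nat.

Definition pos (x : vertex N) : nat := x.1.

Definition valid (x : vertex N) : bool := odd (pos x) || ~~ x.2.

Definition closing (a b : nat) : bool :=
  (a == 0) && (b == N.*2) || (a == N.*2) && (b == 0).

Definition ring_adj : rel (vertex N) := fun x y =>
  [&& x != y, valid x, valid y & near (pos x) (pos y) || closing (pos x) (pos y)].

Lemma vertex_eqE (x y : vertex N) : (x == y) = (pos x == pos y) && (x.2 == y.2).
Proof. by case: x y => [a c] [a' c']; rewrite xpair_eqE. Qed.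

Lemma eq_even_vertex (x y : vertex N) :
  valid x -> valid y -> pos x = pos y -> ~~ odd (pos x) -> x = y.
Proof.
move=> vx vy xy ev; apply/eqP; rewrite vertex_eqE xy eqxx /=.
by move: vx vy; rewrite /valid -xy (negbTE ev) /= => /negbTE -> /negbTE ->.
Qed.

Lemma ring_adj_sym : symmetric ring_adj.
Proof.
move=> x y; rewrite /ring_adj eq_sym /near /closing.
by case: (y != x) (valid x) (valid y) => [] [] [] //=; congr (_ || _); lia.
Qed.

Lemma ring_adj_irrefl : irreflexive ring_adj.
Proof. by move=> x; rewrite /ring_adj eqxx. Qed.

Lemma ring_adj_triangle_near (x y z : vertex N) : 1 < N ->
  ring_adj x y -> ring_adj x z -> ring_adj y z -> near (pos x) (pos y).
Proof.
rewrite /ring_adj !vertex_eqE /valid /near /closing => N_gt1.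
by case: (x.2) (y.2) (z.2) => [] [] [] /=; lia.
Qed.

Lemma no_near_clique4 (x0 x1 x2 x3 : vertex N) :
  [&& valid x0, valid x1, valid x2 & valid x3] ->
  [&& x0 != x1, x0 != x2, x0 != x3, x1 != x2, x1 != x3 & x2 != x3] ->
  [&& near (pos x0) (pos x1), near (pos x0) (pos x2), near (pos x0) (pos x3),
      near (pos x1) (pos x2), near (pos x1) (pos x3) & near (pos x2) (pos x3)] -> False.
Proof.
rewrite !vertex_eqE /valid /near.
by case: (x0.2) (x1.2) (x2.2) (x3.2) => [] [] [] [] /=; lia.
Qed.

Lemma no_near_book5 (x0 x1 y0 y1 y2 : vertex N) :
  [&& valid x0, valid x1, valid y0, valid y1 & valid y2] ->
  [&& x0 != x1, x0 != y0, x0 != y1, x0 != y2, x1 != y0, x1 != y1, x1 != y2,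
      y0 != y1, y0 != y2 & y1 != y2] ->
  [&& near (pos x0) (pos x1), near (pos x0) (pos y0), near (pos x0) (pos y1),
      near (pos x0) (pos y2), near (pos x1) (pos y0), near (pos x1) (pos y1)
    & near (pos x1) (pos y2)] -> False.
Proof.
rewrite !vertex_eqE /valid /near.
by case: (x0.2) (x1.2) (y0.2) (y1.2) (y2.2) => [] [] [] [] [] /=; lia.
Qed.

Lemma ring_K4_free : 1 < N -> ~ contains_subgraph (@K_rel 4) ring_adj.
Proof.
move=> N_gt1 [f [f_inj f_adj]]; pose o := @Ordinal 4.
have f_valid i j : K_rel i j -> valid (f i) by move=> ij; case/and4P: (f_adj _ _ ij).
have f_near i j k : K_rel i j -> K_rel i k -> K_rel j k -> near (pos (f i)) (pos (f j)).
  by move=> ij ik jk; exact: ring_adj_triangle_near N_gt1 (f_adj _ _ ij) (f_adj _ _ ik) (f_adj _ _ jk).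
apply: (@no_near_clique4 (f (o 0 isT)) (f (o 1 isT)) (f (o 2 isT)) (f (o 3 isT))).
- by rewrite (f_valid _ (o 1 isT)) // !(f_valid _ (o 0 isT)).
- by rewrite !(inj_eq f_inj).
- by rewrite (f_near _ _ (o 2 isT)) // (f_near _ _ (o 1 isT)) // (f_near _ _ (o 1 isT)) //
    !(f_near _ _ (o 0 isT)).
Qed.

Lemma ring_B5_free : 1 < N -> ~ contains_subgraph (@B_rel 5) ring_adj.
Proof.
move=> N_gt1 [f [f_inj f_adj]]; pose o := @Ordinal 5.
have f_valid i j : B_rel i j -> valid (f i) by move=> ij; case/and4P: (f_adj _ _ ij).
have f_near i j k : B_rel i j -> B_rel i k -> B_rel j k -> near (pos (f i)) (pos (f j)).
  by move=> ij ik jk; exact: ring_adj_triangle_near N_gt1 (f_adj _ _ ij) (f_adj _ _ ik) (f_adj _ _ jk).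
apply: (@no_near_book5 (f (o 0 isT)) (f (o 1 isT)) (f (o 2 isT)) (f (o 3 isT)) (f (o 4 isT))).
- by rewrite (f_valid _ (o 1 isT)) // !(f_valid _ (o 0 isT)).
- by rewrite !(inj_eq f_inj).
- by rewrite (f_near _ _ (o 2 isT)) // (f_near _ _ (o 1 isT)) // (f_near _ _ (o 1 isT)) //
    (f_near _ _ (o 1 isT)) // !(f_near _ _ (o 0 isT)).
Qed.

Lemma ring_book_free b : 1 < N -> 5 <= b -> ~ contains_subgraph (@B_rel b) ring_adj.
Proof. by move=> N_gt1 b5 /(contains_subgraph_trans (B_rel_leq b5)); exact: ring_B5_free. Qed.

Definition vert (v : nat) (c : bool) : vertex N := (inord v, c).

Lemma pos_vert v c : v <= N.*2 -> pos (vert v c) = v.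
Proof. exact: inordK. Qed.

Lemma ring_adj_vert v w c d : v <= N.*2 -> w <= N.*2 ->
  ring_adj (vert v c) (vert w d) =
  [&& (v != w) || (c != d), odd v || ~~ c, odd w || ~~ d & near v w || closing v w].
Proof. by move=> hv hw; rewrite /ring_adj vertex_eqE /valid !pos_vert // negb_and. Qed.

Lemma ring_diamond_tips (col : vertex N -> 'I_3) :
  (forall x y, ring_adj x y -> col x != col y) ->
  forall i, i < N -> col (vert i.*2 false) = col (vert i.*2.+2 false).
Proof.
move=> col_ok i lt_iN.
apply: (@ord3_pigeonhole (col (vert i.*2.+1 false)) (col (vert i.*2.+1 true))); apply: col_ok;
  rewrite ring_adj_vert /= ?odd_double /near; lia.
Qed.

Lemma ring_not_3colorable : 0 < N -> ~ three_colorable ring_adj.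
Proof.
move=> N_gt0 [col col_ok].
have tips i : i <= N -> col (vert 0 false) = col (vert i.*2 false).
  by elim: i => [//|i IH] le_iN; rewrite IH; [exact: ring_diamond_tips | lia].
have closing_edge : ring_adj (vert 0 false) (vert N.*2 false) by rewrite ring_adj_vert /closing; lia.
by move: (col_ok _ _ closing_edge); rewrite -(tips N) // eqxx.
Qed.

Lemma closing_edge_end (x y u v : vertex N) : ring_adj x y -> ring_adj u v ->
  closing (pos x) (pos y) -> closing (pos u) (pos v) -> u = x \/ u = y.
Proof.
move=> /and4P [_ vx vy _] /and4P [_ vu _ _] cxy cuv.
suff: (u == x) || (u == y) by case/orP => /eqP; auto.
move: vx vy vu cxy cuv; rewrite !vertex_eqE /valid /closing.
by case: (x.2) (y.2) (u.2) => [] [] [] /=; rewrite ?odd_double; lia.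
Qed.

Definition in_window (Q : nat) (x : vertex N) : bool :=
  [&& valid x, Q <= pos x <= Q + 2 & odd Q ==> (pos x <= Q + 1)].

(* A window holds at most one odd position, hence at most one upper-layer vertex. *)
Definition window_code (Q : nat) (x : vertex N) : 'I_4 :=
  inord (if x.2 then 3 else pos x - Q).

Lemma window_code_inj Q x y : in_window Q x -> in_window Q y ->
  window_code Q x = window_code Q y -> x = y.
Proof.
move=> /and3P [vx wx ox] /and3P [vy wy oy] /(congr1 val) /=.
rewrite !inordK; try by case: ifP; lia.
move=> code_xy; apply/eqP; rewrite vertex_eqE; move: vx vy code_xy ox oy; rewrite /valid.
by case: (x.2) (y.2) => [] [] /=; lia.
Qed.

Section RingCycle.
Variables (k : nat) (k_gt2 : 2 < k) (f : 'I_k -> vertex N).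
Hypotheses (k_le : k <= N.*2) (f_inj : injective f)
  (f_adj : forall i j, C_rel i j -> ring_adj (f i) (f j)).

Let F := cyc (ltnW k_gt2) f.

Lemma ring_cycle_near i : near (pos (F i)) (pos (F i.+1)).
Proof.
have adj j : ring_adj (F j) (F j.+1) := cyc_adj (ltnW k_gt2) f_adj j.
have window j l : j <= l < j + k -> F l = F j -> l = j by exact: cyc_window_inj.
have closing_of j : ~~ near (pos (F j)) (pos (F j.+1)) -> closing (pos (F j)) (pos (F j.+1)).
  by case/and4P: (adj j) => _ _ _; case: near.
apply: contraT => /closing_of c_i.
have near_rest j : i < j < i + k -> near (pos (F j)) (pos (F j.+1)).
  move=> ij; apply: contraT => /closing_of c_j.
  have [Fj|Fj] := closing_edge_end (adj i) (adj j) c_i c_j.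
    by have := window i j _ Fj; lia.
  have ji : j = i.+1 by apply: window Fj; lia.
  subst j.
  have c_j' : closing (pos (F i.+2)) (pos (F i.+1)) by move: c_j; rewrite /closing; lia.
  have adj' : ring_adj (F i.+2) (F i.+1) by rewrite ring_adj_sym.
  have [F2|F2] := closing_edge_end (adj i) adj' c_i c_j'.
  - by have := window i i.+2 _ F2; lia.
  - by have := window i.+1 i.+2 _ F2; lia.
have [|far_lo far_hi] := @near_walk_dist (fun j => pos (F j)) i.+1 k.-1.
  by move=> j hj; apply: near_rest; lia.
move: far_lo far_hi c_i; rewrite (_ : i.+1 + k.-1 = i + k); last lia.
by rewrite /F cycD /closing; lia.
Qed.

Lemma ring_cycle_window : exists Q, forall i, in_window Q (F i).
Proof.
have F_valid i : valid (F i) by case/and4P: (cyc_adj (ltnW k_gt2) f_adj i).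
have [|||Q FQ] := @periodic_walk_window k (ltnW (ltnW k_gt2)) (fun i => pos (F i)).
- by move=> i; rewrite /F cycD.
- exact: ring_cycle_near.
- move=> i j ij Fji; apply: contraT => even_i.
  have Fij : F j = F i by apply: eq_even_vertex; rewrite ?Fji.
  by have := cyc_window_inj f_inj (i := i) (j := j) _ Fij; lia.
by exists Q => i; rewrite /in_window F_valid /=; have := FQ i; lia.
Qed.

End RingCycle.

Lemma ring_cycle_free k : 5 <= k <= N.*2 -> ~ contains_subgraph (@C_rel k) ring_adj.
Proof.
move=> /andP [k5 kN] [f [f_inj f_adj]].
have k_gt2 : 2 < k by lia.
have [Q F_window] := ring_cycle_window k_gt2 kN f_inj f_adj.
have F_inj := cyc_window_inj (k_gt1 := ltnW k_gt2) f_inj.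
have: injective (fun i : 'I_5 => window_code Q (cyc (ltnW k_gt2) f i)).
  move=> i j /(window_code_inj (F_window i) (F_window j)) Fij.
  apply: ord_inj; have := ltn_ord i; have := ltn_ord j.
  case/orP: (leq_total i j) => [le_ij|le_ji] lt_j5 lt_i5.
  - by apply/esym/F_inj; rewrite ?Fij //; lia.
  - by apply: F_inj; rewrite ?Fij //; lia.
by move/leq_card; rewrite !card_ord.
Qed.

Section Drawing.
Local Open Scope ring_scope.
Local Open Scope classical_set_scope.
Local Notation R := Rdefinitions.R.

(* The end tips are at height 0, so the closing edge runs along the x-axis above
   all other edges; the two vertices at an odd position are stacked at heights
   -1 and -2, and the dummies float at height 1. *)
Definition height (x : vertex N) : R :=
  if x.2 then (if odd (pos x) then -2 else 1)
  else if (pos x == 0)%N || (pos x == N.*2) then 0 else -1.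

Definition point (x : vertex N) : R * R := ((pos x)%:R, height x).

Lemma point_inj : injective point.
Proof.
move=> x y [/eqP]; rewrite eqr_nat => /eqP pxy hxy.
apply/eqP; rewrite vertex_eqE pxy eqxx /=; move: hxy; rewrite /height pxy; clear pxy.
by case: (x.2) (y.2) => [] [] //; case: ifP => _ //; case: ifP => _ // h; exfalso; lra.
Qed.

Lemma pos_height_inj x y : pos x = pos y -> height x = height y -> x = y.
Proof. by move=> pxy hxy; apply: point_inj; rewrite /point pxy hxy. Qed.

Lemma height_valid x : valid x -> -2 <= height x <= 0.
Proof.
rewrite /valid /height; case: (x.2); case: (odd (pos x)) => //= _; try case: ifP => _;
  apply/andP; split; lra.
Qed.

Lemma height_eq0 x : (height x == 0) = ~~ x.2 && ((pos x == 0)%N || (pos x == N.*2)).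
Proof.
rewrite /height; case: (x.2) => /=; case: ifP => _;
  by rewrite ?eqxx ?oppr_eq0 ?oner_eq0 ?pnatr_eq0.
Qed.

Definition oriented (x y : vertex N) : bool :=
  (pos x < pos y)%N || (pos x == pos y) && ~~ x.2.

Lemma ring_adj_oriented x y : ring_adj x y -> oriented x y || oriented y x.
Proof. by case/and4P; rewrite vertex_eqE /oriented; case: (x.2) (y.2) => [] [] /=; lia. Qed.

Lemma oriented_adj_cases x y : (0 < N)%N -> ring_adj x y -> oriented x y ->
  [\/ [&& pos x == 0, pos y == N.*2, ~~ x.2 & ~~ y.2],
      [&& pos y == pos x, odd (pos x), ~~ x.2 & y.2] | pos y == (pos x).+1].
Proof.
rewrite /ring_adj vertex_eqE /valid /oriented /near /closing => N_gt0 xy oxy.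
by apply/or3P; move: xy oxy; case: (x.2) (y.2) => [] [] /=; lia.
Qed.

Lemma height_odd x : odd (pos x) -> height x = if x.2 then -2 else -1.
Proof.
rewrite /height => ox; rewrite ox; case: (x.2) => //; case: ifP => // /orP [] /eqP px.
all: by move: ox; rewrite px ?odd_double.
Qed.

Lemma height_cases x : [\/ height x = 1, height x = 0, height x = -1 | height x = -2].
Proof.
rewrite /height; case: (x.2); case: ifP => _; try case: ifP => _;
  by [exact: Or41 | exact: Or42 | exact: Or43 | exact: Or44].
Qed.

Lemma oriented_edge_heights x y : (0 < N)%N -> ring_adj x y -> oriented x y ->
  [\/ [/\ pos x = 0%N, pos y = N.*2, height x = 0 & height y = 0],
      [/\ pos y = pos x, height x = -1 & height y = -2] |
      [/\ pos y = (pos x).+1, height x <= 0, height y <= 0 & height x < 0 \/ height y < 0]].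
Proof.
move=> N_gt0 xy oxy; have /and4P [_ vx vy _] := xy.
case: (oriented_adj_cases N_gt0 xy oxy) => [/and4P [/eqP px /eqP py x2 y2]|/and4P [/eqP pyx ox x2 y2]|/eqP pyx].
- by apply: Or31; split=> //; apply/eqP; rewrite height_eq0 ?x2 ?y2 ?px ?py eqxx ?orbT.
- have oy : odd (pos y) by rewrite pyx.
  by apply: Or32; rewrite !height_odd // (negbTE x2) y2.
apply: Or33; move: (height_valid vx) (height_valid vy) => /andP [_ hx] /andP [_ hy].
split=> //; have [hx0|hx0] := ltP (height x) 0; [by left | right].
rewrite lt_neqAle hy andbT; apply/negP => /eqP hy0.
have /eqP : height x = 0 by apply/eqP; rewrite eq_le hx hx0.
move: hy0 => /eqP; rewrite !height_eq0 => /andP [_ ty] /andP [_ tx].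
by move: tx ty; rewrite pyx; lia.
Qed.

Lemma oriented_seg_avoids x y z s : (0 < N)%N -> ring_adj x y -> oriented x y ->
  0 < s < 1 -> seg (point x) (point y) s <> point z.
Proof.
move=> N_gt0 xy oxy /andP [s0 s1]; rewrite /seg /point /= => -[X Y].
case: (oriented_edge_heights N_gt0 xy oxy) => [[px py hx hy]|[pyx hx hy]|[pyx hx hy hxy]].
- have /eqP : height z = 0 by rewrite -Y hx hy; lra.
  have N2 : (0 : R) < (N.*2)%:R by rewrite ltr0n double_gt0.
  rewrite height_eq0 => /andP [_ /orP [] /eqP pz]; move: X; rewrite px py pz mulr0n;
    move: (N.*2)%:R N2 => c c0 X; nra.
- by rewrite hx hy in Y; case: (height_cases z) => hz; rewrite hz in Y; lra.
- move: X; rewrite pyx -natr1 => X.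
  have pz : pos x = pos z by apply: (natr_add_frac_inj (s := s) (t := 0)); lra.
  by move: X; rewrite pz; lra.
Qed.

Lemma step_segs_meet x y u v s t : ring_adj x y -> ring_adj u v ->
  pos y = (pos x).+1 -> pos v = (pos u).+1 -> 0 < s < 1 -> 0 < t < 1 ->
  seg (point x) (point y) s = seg (point u) (point v) t -> x = u /\ y = v.
Proof.
move=> xy uv pyx pvu /andP [s0 s1] /andP [t0 t1]; rewrite /seg /point /= => -[X Y].
move: X; rewrite pyx pvu -!natr1 => X.
have pxu : pos x = pos u by apply: (natr_add_frac_inj (s := s) (t := t)); lra.
have st : s = t by move: X; rewrite pxu; lra.
subst t; have pyv : pos y = pos v by rewrite pyx pvu pxu.
have /and4P [_ vx vy _] := xy; have /and4P [_ vu vv _] := uv.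
have [even_x|odd_x] := boolP (~~ odd (pos x)).
- have xu : x = u by apply: eq_even_vertex.
  subst u; split=> //; apply: pos_height_inj => //.
  have : s * height y = s * height v by move: Y; lra.
  by apply: mulfI; rewrite gt_eqF.
- have yv : y = v by apply: eq_even_vertex; rewrite // pyx.
  subst v; split=> //; apply: pos_height_inj => //.
  have : (1 - s) * height x = (1 - s) * height u by move: Y; lra.
  by apply: mulfI; rewrite subr_eq0 gt_eqF.
Qed.

Lemma oriented_segs_meet x y u v s t : (0 < N)%N ->
  ring_adj x y -> oriented x y -> ring_adj u v -> oriented u v -> 0 < s < 1 -> 0 < t < 1 ->
  seg (point x) (point y) s = seg (point u) (point v) t -> x = u /\ y = v.
Proof.
move=> N_gt0 xy oxy uv ouv s01 t01 meet; have := meet.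
move: (s01) (t01) => /andP [s0 s1] /andP [t0 t1]; rewrite /seg /point /= => -[X Y].
case: (oriented_edge_heights N_gt0 xy oxy) => [[px py hx hy]|[pyx hx hy]|[pyx hx hy hxy]];
case: (oriented_edge_heights N_gt0 uv ouv) => [[pu pv hu hv]|[pvu hu hv]|[pvu hu hv huv]].
- by split; apply: pos_height_inj; rewrite ?px ?py ?pu ?pv ?hx ?hy ?hu ?hv.
- by exfalso; move: Y; rewrite hx hy hu hv; lra.
- by exfalso; move: Y; rewrite hx hy; case: huv => h; nra.
- by exfalso; move: Y; rewrite hx hy hu hv; lra.
- have pxu : pos x = pos u.
    by move: X; rewrite pyx pvu !subrr !mulr0 !addr0 => /eqP; rewrite eqr_nat => /eqP.
  by split; apply: pos_height_inj; rewrite ?pyx ?pvu ?pxu ?hx ?hy ?hu ?hv.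
- exfalso; move: X; rewrite pyx pvu -natr1 subrr mulr0 => X.
  have pux : pos u = pos x by apply: (natr_add_frac_inj (s := t) (t := 0)); lra.
  by move: X; rewrite pux; lra.
- by exfalso; move: Y; rewrite hu hv; case: hxy => h; nra.
- exfalso; move: X; rewrite pyx pvu -natr1 subrr mulr0 => X.
  have pxu : pos x = pos u by apply: (natr_add_frac_inj (s := s) (t := 0)); lra.
  by move: X; rewrite pxu; lra.
exact: step_segs_meet meet.
Qed.

Lemma ring_seg_avoids x y z s : (0 < N)%N -> ring_adj x y -> 0 < s < 1 ->
  seg (point x) (point y) s <> point z.
Proof.
move=> N_gt0 xy /andP [s0 s1]; case/orP: (ring_adj_oriented xy) => o.
  by apply: oriented_seg_avoids => //; apply/andP.
rewrite segC; apply: oriented_seg_avoids => //; first by rewrite ring_adj_sym.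
by apply/andP; split; lra.
Qed.

Lemma ring_segs_meet x y u v s t : (0 < N)%N -> ring_adj x y -> ring_adj u v ->
  0 < s < 1 -> 0 < t < 1 -> seg (point x) (point y) s = seg (point u) (point v) t ->
  [set x; y] = [set u; v] :> set (vertex N).
Proof.
move=> N_gt0 xy uv s01 t01.
wlog oxy : x y s xy s01 / oriented x y.
  move=> oriented_case; case/orP: (ring_adj_oriented xy) => o; first exact: oriented_case.
  rewrite segC setUC; apply: oriented_case => //; first by rewrite ring_adj_sym.
  by move: s01 => /andP [s0 s1]; apply/andP; split; lra.
wlog ouv : u v t uv t01 / oriented u v.
  move=> oriented_case; case/orP: (ring_adj_oriented uv) => o; first exact: oriented_case.
  rewrite [seg (point u) _ _]segC [[set u; v]]setUC; apply: oriented_case => //.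
    by rewrite ring_adj_sym.
  by move: t01 => /andP [t0 t1]; apply/andP; split; lra.
by case/(oriented_segs_meet N_gt0 xy oxy uv ouv s01 t01) => -> ->.
Qed.

Lemma ring_planar : (0 < N)%N -> planar ring_adj.
Proof.
move=> N_gt0; exists point, (fun x y => seg (point x) (point y)); split; first exact: point_inj.
move=> x y xy; split.
- exact/continuous_subspaceT/seg_continuous.
- by rewrite seg0 seg1.
- move=> s t _ _; apply: seg_inj; rewrite (inj_eq point_inj); by case/and4P: xy.
- by move=> t z t01; apply: ring_seg_avoids.
- by move=> u v s t uv xy_uv s01 t01 meet; apply: xy_uv; exact: ring_segs_meet meet.
Qed.

End Drawing.

End DiamondRing.

Theorem mainTheorem3 (l b : nat) :
  5 <= l -> 5 <= b ->
  exists (T : finType) (e : rel T),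
    [/\ simple_graph e /\ planar e,
        ~ contains_subgraph (@K_rel 4) e,
        ~ contains_subgraph (@B_rel b) e,
        (forall k, 5 <= k <= l -> ~ contains_subgraph (@C_rel k) e) &
        ~ three_colorable e].
Proof.
move=> l5 b5; exists (vertex l), (@ring_adj l).
have l_gt1 : 1 < l by lia.
split.
- by split; [split; [exact: ring_adj_sym | exact: ring_adj_irrefl] | apply: ring_planar; lia].
- exact: ring_K4_free.
- exact: ring_book_free.
- by move=> k /andP [k5 kl]; apply: ring_cycle_free; lia.
- by apply: ring_not_3colorable; lia.
Qed.
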